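(* Let $G$ be a countable amenable group and $\{W_n\}$ an increasing sequence of finite subsets of $G$ with $1_G\in W_n$ such that (1) $\{W_n\}$ is a Følner sequence, and (2) for some constant $C$, each $W_n$ is individually $C$-incompressible. Then there exists a subsequence $\{W_{n(i)}\}$ which is quasi-incompressible.
   Context: Følner: $|W_n\triangle gW_n|/|W_n|\to0$ for every $g\in G$. A finite set $W\ni1_G$ is individually $C$-incompressible if for every sequence $\{Wf_i\}$ with $f_i\notin\bigcup_{j<i}Wf_j$ for all $i$, the number of sets $Wf_i$ containing $1_G$ is at most $C$. An increasing sequence $\{V_n\}$ of finite sets containing $1_G$, each individually $C$-incompressible for the same $C$, is quasi-incompressible if for every $\lambda>0$, for all large enough $k$ and every $n>k$, $\frac{1}{|V_n|}|\{f\in V_n: V_kf\not\subseteq V_n\}|\le|V_k|^{-\lambda}$. *)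

From mathcomp Require Import all_boot.
From mathcomp Require Import finmap.
From Stdlib Require Import Reals.

Set Implicit Arguments. Unset Strict Implicit. Unset Printing Implicit Defensive.

Local Open Scope fset_scope.

(* An (abstract, possibly infinite) group with carrier G, given by its
   operations; countability and decidable equality come from G : countType. *)
Record is_group (G : Type) (mul : G -> G -> G) (inv : G -> G) (one : G) : Prop :=
  { mulA : forall x y z, mul x (mul y z) = mul (mul x y) z;
    mul1g : forall x, mul one x = x;
    mulVg : forall x, mul (inv x) x = one }.

Section Defs.
Variable G : countType.
Variable mul : G -> G -> G.
Variable one : G.

Definition ltrans (g : G) (W : {fset G}) : {fset G} := [fset mul g w | w in W].
Definition rtrans (W : {fset G}) (f : G) : {fset G} := [fset mul w f | w in W].

Definition symdiff (A B : {fset G}) : {fset G} := (A `\` B) `|` (B `\` A).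

Definition Folner (W : nat -> {fset G}) : Prop :=
  forall g : G, forall eps : R, (0 < eps)%R ->
    exists N : nat, forall n : nat, (N <= n)%N ->
      (INR #|` symdiff (W n) (ltrans g (W n))| / INR #|` W n| <= eps)%R.

Definition amenable : Prop := exists W : nat -> {fset G}, Folner W.

Definition indiv_incompressible (C : nat) (W : {fset G}) : Prop :=
  one \in W /\
  forall s : seq G,
    (forall i j : nat, (i < size s)%N -> (j < i)%N ->
        nth one s i \notin rtrans W (nth one s j)) ->
    (count (fun f => one \in rtrans W f) s <= C)%N.

Definition increasing_seq (V : nat -> {fset G}) : Prop :=
  forall n : nat, V n `<=` V n.+1.

Definition bad_set (Vk Vn : {fset G}) : {fset G} :=
  [fset f in Vn | ~~ (rtrans Vk f `<=` Vn)].

Definition quasi_incompressible (V : nat -> {fset G}) : Prop :=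
  increasing_seq V /\
  (forall n, one \in V n) /\
  (exists C : nat, forall n, indiv_incompressible C (V n)) /\
  (forall lam : R, (0 < lam)%R ->
     exists K : nat, forall k : nat, (K <= k)%N -> forall n : nat, (k < n)%N ->
       (INR #|` bad_set (V k) (V n)| / INR #|` V n|
          <= Rpower (INR #|` V k|) (- lam))%R).

End Defs.

From Pilot Require Import Defs.
From mathcomp Require Import all_boot.
From mathcomp Require Import finmap.
From Stdlib Require Import Reals Lra IndefiniteDescription.

(* A point f of W_n is bad for W_k when w f leaves W_n for some w in W_k, so
   the bad points are covered by the sets {f in W_n | w f \notin W_n}, w in W_k;
   left multiplication by w injects each of them into W_n Δ w W_n, hence by the
   Følner property the bad proportion of W_n tends to 0 for every fixed k.
   Choosing n(i+1) so large that this proportion is below |W_n(i)|^-i, the bad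
   set of W_n(k) in W_n(t) lies in that of W_n(t-1), whose proportion is at most
   |W_n(t-1)|^-(t-1) <= |W_n(k)|^-lambda once t - 1 >= k >= lambda.
   Amenability is only needed through the given Følner sequence, and the
   incompressibility constant C passes to the subsequence unchanged. *)

Local Open Scope fset_scope.

Definition eventually (P : nat -> Prop) : Prop :=
  exists N, forall n, (N <= n)%N -> P n.

Lemma eventually_ratio_sum {I : Type} (s : seq I) (u : I -> nat -> nat)
    (w : nat -> R) (d : R) :
  (forall i, eventually (fun n => (INR (u i n) / w n <= d)%R)) ->
  eventually (fun n => (INR (\sum_(i <- s) u i n) / w n <= INR (size s) * d)%R).
Proof.
move=> ev_u; elim: s => [|i s [N IH]].
  by exists 0%N => n _; rewrite big_nil Rdiv_0_l /=; lra.
have [M HM] := ev_u i.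
exists (maxn M N) => n; rewrite geq_max => /andP [/HM ui /IH us].
rewrite big_cons plus_INR Rdiv_plus_distr [size _]/= S_INR; lra.
Qed.

Lemma fast_subsequence (P : nat -> nat -> nat -> Prop) :
  (forall i m, eventually (P i m)) ->
  exists ns : nat -> nat,
    (forall i, (ns i < ns i.+1)%N) /\ (forall i, P i (ns i) (ns i.+1)).
Proof.
move=> ev_P.
have [next next_spec] : exists next : nat * nat -> nat,
    forall im, (im.2 < next im)%N /\ P im.1 im.2 (next im).
  apply: (functional_choice (fun im n => im.2 < n /\ P im.1 im.2 n)%N).
  move=> [i m]; have [N HN] := ev_P i m.
  exists (maxn N m.+1); split; first exact: leq_maxr.
  by apply: HN; exact: leq_maxl.
exists (fun i => iteri i (fun i m => next (i, m)) 0%N).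
by split=> i; [exact: (next_spec (i, _)).1 | exact: (next_spec (i, _)).2].
Qed.

Lemma ratio_le_INR (a b c : nat) :
  (a <= b)%N -> (INR a / INR c <= INR b / INR c)%R.
Proof.
move=> /leP /le_INR ab; case: c => [|c]; first by rewrite !Rdiv_0_r; lra.
by apply: Rmult_le_compat_r ab; apply/Rlt_le/Rinv_0_lt_compat/lt_0_INR/ltP.
Qed.

Lemma Rpower_Ropp_le (a b x y : R) :
  (1 <= a <= b)%R -> (0 <= x <= y)%R -> (Rpower b (- y) <= Rpower a (- x))%R.
Proof.
move=> [a_ge1 ab] [x_ge0 xy].
apply: (Rle_trans _ (Rpower b (- x))); first by apply: Rle_Rpower; lra.
rewrite !Rpower_Ropp; apply: Rinv_le_contravar; first exact: exp_pos.
by apply: Rle_Rpower_l; lra.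
Qed.

Lemma card_bigfcup_le {T : choiceType} {I : Type} (r : seq I) (F : I -> {fset T}) :
  (#|` \bigcup_(i <- r) F i| <= \sum_(i <- r) #|` F i|)%N.
Proof.
elim/big_rec2: _ => [|i n U _ Un]; first by rewrite cardfs0.
by rewrite (leq_trans (leq_card_fsetU (F i) U).1) ?leq_add2l.
Qed.

Section Translates.
Context {G : countType} {mul : G -> G -> G}.

Lemma increasing_seq_le (V : nat -> {fset G}) :
  increasing_seq V -> {homo V : i j / (i <= j)%N >-> i `<=` j}.
Proof. exact: homo_leq (@fsubset_refl _) (fun _ _ _ => @fsubset_trans _ _ _ _). Qed.

Lemma bad_setS (A B V : {fset G}) :
  A `<=` B -> bad_set mul A V `<=` bad_set mul B V.
Proof.
move=> AB; apply/fsubsetP => f; rewrite !inE => /andP [-> /=].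
apply: contra => /fsubsetP BfV; apply/fsubsetP => _ /imfsetP [w /= Aw ->].
by apply: BfV; apply/imfsetP; exists w => //; exact: (fsubsetP AB).
Qed.

Lemma bad_set_sub_bigfcup (A V : {fset G}) :
  bad_set mul A V `<=` \bigcup_(a <- A) [fset f in V | mul a f \notin V].
Proof.
apply/fsubsetP => f; rewrite !inE => /andP [Vf /fsubsetPn [_ /imfsetP [a /= Aa ->]]].
by move=> afV; apply/bigfcupP; exists a; rewrite ?andbT // !inE Vf.
Qed.

Lemma bad_set_decay (V : nat -> {fset G}) :
  increasing_seq V -> (forall n, (0 < #|` V n|)%N) ->
  (forall t, INR #|` bad_set mul (V t) (V t.+1)| / INR #|` V t.+1|
             <= Rpower (INR #|` V t|) (- INR t))%R ->
  forall lam, (0 < lam)%R ->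
  exists K, forall k, (K <= k)%N -> forall n, (k < n)%N ->
    (INR #|` bad_set mul (V k) (V n)| / INR #|` V n|
       <= Rpower (INR #|` V k|) (- lam))%R.
Proof.
move=> /increasing_seq_le V_mono V_gt0 V_fast lam lam_gt0.
have [K lam_lt_K] := INR_unbounded lam.
exists K => k Kk [//|t]; rewrite ltnS => kt.
have fewer_bad : (INR #|` bad_set mul (V k) (V t.+1)| / INR #|` V t.+1|
    <= INR #|` bad_set mul (V t) (V t.+1)| / INR #|` V t.+1|)%R.
  exact/ratio_le_INR/fsubset_leq_card/bad_setS/V_mono.
have smaller_bound :
    (Rpower (INR #|` V t|) (- INR t) <= Rpower (INR #|` V k|) (- lam))%R.
  apply: Rpower_Ropp_le.
    by split; [exact/(le_INR 1)/leP/V_gt0 | exact/le_INR/leP/fsubset_leq_card/V_mono].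
  have /le_INR : (K <= t)%coq_nat by apply/leP; exact: leq_trans Kk kt.
  lra.
exact: Rle_trans fewer_bad (Rle_trans _ _ _ (V_fast t) smaller_bound).
Qed.

Context {inv : G -> G} {one : G} (HG : is_group mul inv one).

Lemma mulg_injl (v : G) : injective (mul v).
Proof.
move=> x y vx_vy.
by rewrite -(Defs.mul1g HG x) -(Defs.mulVg HG v) -(Defs.mulA HG) vx_vy
  (Defs.mulA HG) (Defs.mulVg HG) (Defs.mul1g HG).
Qed.

Lemma card_escape_le (v : G) (V : {fset G}) :
  (#|` [fset f in V | mul v f \notin V]| <= #|` symdiff V (ltrans mul v V)|)%N.
Proof.
set B := [fset f in V | _].
have <- : #|` [fset mul v f | f in B]| = #|` B| by rewrite card_imfset //; exact: mulg_injl.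
apply: fsubset_leq_card.
apply/fsubsetP => y /imfsetP [f /=]; rewrite !inE => /andP [Vf vfV] ->.
by rewrite (negbTE vfV) andbF /=; apply/imfsetP; exists f.
Qed.

Lemma card_bad_set_le (A V : {fset G}) :
  (#|` bad_set mul A V| <= \sum_(a <- A) #|` symdiff V (ltrans mul a V)|)%N.
Proof.
apply: leq_trans (fsubset_leq_card (bad_set_sub_bigfcup A V)) _.
apply: leq_trans (card_bigfcup_le _ _) _.
by apply: leq_sum => a _; exact: card_escape_le.
Qed.

Lemma Folner_bad_set (W : nat -> {fset G}) (A : {fset G}) (eps : R) :
  Folner mul W -> (0 < eps)%R ->
  eventually (fun n => (INR #|` bad_set mul A (W n)| / INR #|` W n| <= eps)%R).
Proof.
move=> HF eps_gt0.
have size_ge0 := pos_INR (size A).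
pose d := (eps / (INR (size A) + 1))%R.
have d_gt0 : (0 < d)%R by apply: Rdiv_lt_0_compat; lra.
have size_d : (INR (size A) * d <= eps)%R.
  have -> : (INR (size A) * d = eps - d)%R by rewrite /d; field; lra.
  lra.
have [N HN] := eventually_ratio_sum A
  (fun a n => #|` symdiff (W n) (ltrans mul a (W n))|)
  (fun n => INR #|` W n|) d (fun a => HF a d d_gt0).
exists N => n /HN sum_le; apply: Rle_trans size_d.
by apply: Rle_trans sum_le; apply: ratio_le_INR; exact: card_bad_set_le.
Qed.

End Translates.

Theorem lemma2p3 (G : countType) (mul : G -> G -> G) (inv : G -> G) (one : G)
  (HG : is_group mul inv one)
  (Hamen : amenable mul)
  (W : nat -> {fset G})
  (Hinc : increasing_seq W)
  (H1 : forall n, one \in W n)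
  (HF : Folner mul W)
  (C : nat) (HC : forall n, indiv_incompressible mul one C (W n)) :
  exists nseq : nat -> nat,
    (forall i, (nseq i < nseq i.+1)%N) /\
    quasi_incompressible mul one (fun i => W (nseq i)).
Proof.
have [ns [ns_incr ns_fast]] := fast_subsequence
  (fun i m n => INR #|` bad_set mul (W m) (W n)| / INR #|` W n|
                <= Rpower (INR #|` W m|) (- INR i))%R
  (fun i m => Folner_bad_set HG W (W m) _ HF (exp_pos _)).
have Wns_inc : increasing_seq (fun i => W (ns i)).
  by move=> i; exact/increasing_seq_le/ltnW.
exists ns; split=> //; split=> //; split=> //; split; first by exists C.
apply: bad_set_decay => // n.
by rewrite cardfs_gt0; apply/fset0Pn; exists one.
Qed.
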